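(* Let $w$ be a doubly monotone contract, i.e. both $y\mapsto w(y)$ and $y\mapsto y-w(y)$ are non-decreasing on $\mathbb{R}_+$. Then either (1) $V_P(w\mid \{a_0\}) = V_P(w)$, or (2) for every $\epsilon>0$ there exists $x\in\mathbb{R}_+$ with $w(x)>r_0^w$ such that, for the project $a_1=(\delta_x,0)$ (which yields prize $x$ with certainty at zero cost), $V_P(w\mid\{a_0,a_1\}) < V_P(w)+\epsilon$.
   Context: Model. A project is a pair $a=(F,c)$ where $F$ is a probability distribution on $\mathbb{R}_+$ with finite mean and $c\ge 0$ is a cost. An agent has a finite set of projects $\mathcal{A}=\{a_i\}_{i=0}^n$, $a_i=(F_i,c_i)$, whose prizes $y_i\sim F_i$ are drawn independently. The agent searches sequentially with recall (Pandora's box search): at each stage, having observed the prizes of the projects opened so far, he either opens a not-yet-opened project $a_i$, paying $c_i$ and learning $y_i$, or stops and presents a single prize among those observed (he may always present the prize $0$, e.g. without opening any project). A contract is a measurable function $w:\mathbb{R}_+\to\mathbb{R}$ with $w(y)\ge 0$ for all $y$ (limited liability). If the agent presents prize $y$ having opened the set $S$ of projects, the (risk-neutral) agent's payoff is $w(y)-\sum_{i\in S}c_i$ and the (risk-neutral) principal's payoff is $y-w(y)$. Let $\Sigma(w,\mathcal{A})$ denote the set of search strategies maximizing the agent's expected payoff, and (ties broken in the principal's favor) $V_P(w\mid\mathcal{A})=\sup_{\sigma\in\Sigma(w,\mathcal{A})}\mathbb{E}_\sigma[y-w(y)]$, where $\mathbb{E}_\sigma$ is expectation over the presented prize. The principal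 knows only one project $a_0=(F_0,c_0)$ of the agent; her payoff guarantee from $w$ is $V_P(w)=\inf_{\mathcal{A}\supseteq\{a_0\}}V_P(w\mid\mathcal{A})$, the infimum over all finite sets of projects containing $a_0$. The $w$-induced index of $a_0$, $r_0^w$, is the smallest solution $r$ of $c_0=\int [w(y)-r]^+\,dF_0(y)$. $\delta_x$ denotes the Dirac mass at $x$. *)

From HB Require Import structures.
From mathcomp Require Import all_boot all_order all_algebra.
From mathcomp Require Import all_classical all_reals all_analysis.
From mathcomp Require Import measurable_realfun lebesgue_integral.
Set Implicit Arguments. Unset Strict Implicit. Unset Printing Implicit Defensive.
Import Order.TTheory GRing.Theory Num.Theory.
Local Open Scope classical_set_scope.
Local Open Scope ring_scope.

Section PandoraDefs.
Variable R : realType.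

Record project := Project { pdist : probability R R ; pcost : R }.

Definition valid_project (a : project) : Prop :=
  [/\ pdist a [set y | y < 0] = 0%E,
      (pdist a).-integrable setT (fun y => y%:E)
    & 0 <= pcost a].

Definition dirac_project (x : R) : project := Project (\d_x : probability R R) 0.

Inductive action (N : nat) := Open of 'I_N | Stop of R.

(* A (deterministic, history dependent) search strategy: a history is the
   sequence of (project opened, prize observed) pairs, in opening order. *)
Definition strategy (N : nat) := seq ('I_N * R) -> action N.

(* Expected payoff of strategy s, where the final presented prize x yields
   g x and opening project i costs c i; k is the fuel (number of further
   openings allowed; N is always enough).  Infeasible actions (opening an
   already-opened project, presenting an unobserved nonzero prize) are read
   as "stop and present 0".  The expectation is the iterated (sequential)
   expectation over the independent prizes. *)
Fixpoint payoff (N : nat) (A : 'I_N -> project) (g : R -> R) (c : 'I_N -> R)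
    (s : strategy N) (k : nat) (h : seq ('I_N * R)) {struct k} : \bar R :=
  match s h with
  | Stop x => if (x == 0) || (x \in map snd h) then (g x)%:E else (g 0)%:E
  | Open i =>
      if i \in map fst h then (g 0)%:E else
      match k with
      | 0 => (g 0)%:E
      | k'.+1 =>
          (\int[pdist (A i)]_z payoff A g c s k' (rcons h (i, z)) - (c i)%:E)%E
      end
  end.

Definition agent_payoff (w : R -> R) N (A : 'I_N -> project) (s : strategy N) :=
  payoff A w (fun i => pcost (A i)) s N [::].

Definition principal_payoff (w : R -> R) N (A : 'I_N -> project) (s : strategy N) :=
  payoff A (fun y => y - w y) (fun=> 0) s N [::].

(* Admissible strategies: every one-step conditional expectation used in the
   payoff recursion is the integral of a measurable function. *)
Definition admissible (w : R -> R) N (A : 'I_N -> project) (s : strategy N) :=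
  forall k h i,
    measurable_fun [set: R]
      (fun z : R => payoff A w (fun j => pcost (A j)) s k (rcons h (i, z)) : \bar R) /\
    measurable_fun [set: R]
      (fun z : R => payoff A (fun y => y - w y) (fun=> 0) s k (rcons h (i, z)) : \bar R).

Definition agent_optimal (w : R -> R) N (A : 'I_N -> project) (s : strategy N) :=
  admissible w A s /\
  forall t, admissible w A t -> (agent_payoff w A t <= agent_payoff w A s)%E.

(* V_P(w | A), ties broken in the principal's favour. *)
Definition VP_given (w : R -> R) N (A : 'I_N -> project) : \bar R :=
  ereal_sup [set principal_payoff w A s | s in agent_optimal w A].

(* V_P(w): infimum over all finite families of projects containing a0
   (a0 placed at index 0). *)
Definition VP (w : R -> R) (a0 : project) : \bar R :=
  ereal_inf [set v | exists n (A : 'I_n.+1 -> project),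
     [/\ forall i, valid_project (A i), A ord0 = a0 & v = VP_given w A]].

Definition is_index (w : R -> R) (a0 : project) (r : R) : Prop :=
  (pcost a0)%:E = (\int[pdist a0]_y (Num.max (w y - r) 0)%:E)%E /\
  forall r', (pcost a0)%:E = (\int[pdist a0]_y (Num.max (w y - r') 0)%:E)%E ->
             r <= r'.

Definition single (a0 : project) : 'I_1 -> project := fun=> a0.
Definition pair (a0 a1 : project) : 'I_2 -> project :=
  fun i => if i == ord0 then a0 else a1.

Definition doubly_monotone (w : R -> R) : Prop :=
  forall y y', 0 <= y -> y <= y' -> w y <= w y' /\ y - w y <= y' - w y'.

End PandoraDefs.

From HB Require Import structures.
From mathcomp Require Import all_boot all_order all_algebra.
From mathcomp Require Import all_classical all_reals all_analysis.
From mathcomp Require Import measurable_realfun lebesgue_integral.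
From mathcomp Require Import lra.
Set Implicit Arguments. Unset Strict Implicit. Unset Printing Implicit Defensive.
Import Order.TTheory GRing.Theory Num.Theory.
Local Open Scope classical_set_scope.
Local Open Scope ring_scope.

(* Write psi(y) = y - w(y) for the principal's share of a presented prize y,
   and call x >= 0 deterring when E[(w(y0) - w(x))^+] < c0: an agent holding x
   never opens a0, and w(x) exceeds its index.  In any family containing a0 the
   agent has an optimal strategy given by backward induction.  As w and psi are
   non-decreasing, along it the principal's continuation is at least psi(X)
   once a0 has been opened (X the best prize in hand), hence at least
   J = E[psi(y0)] if a0 is ever opened; if the agent stops first, he stops at a
   deterring X and the principal gets psi(X) >= I = inf { psi(x) | x deterring }.
   So V_P(w) >= min(J, I).  Conversely V_P(w | {a0}) <= J, and next to a sure
   project (delta_x, 0) with x deterring the agent just takes x, so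
   V_P(w | {a0, (delta_x, 0)}) <= psi(x).  If V_P(w) < V_P(w | {a0}) these
   bounds force I <= V_P(w), and a deterring x with psi(x) < I + eps gives the
   second alternative. *)

Section measurability.
Variables (d : measure_display) (T : measurableType d) (R : realType).
Local Open Scope ereal_scope.

Lemma measurable_cst_set (Q : Prop) : measurable [set _ : T | Q].
Proof.
have [q|nq] := pselect Q.
  by rewrite [X in measurable X](_ : _ = setT) //; apply/seteqP; split.
by rewrite [X in measurable X](_ : _ = set0) //; apply/seteqP; split.
Qed.

Lemma measurable_fun_option_cases (I : finType) (sel : T -> option I)
    (f g : T -> \bar R) (gi : I -> T -> \bar R) :
  (forall o, measurable [set x | sel x = o]) -> measurable_fun setT g ->
  (forall i, measurable_fun setT (gi i)) ->
  (forall x, f x = if sel x is Some i then gi i x else g x) ->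
  measurable_fun setT f.
Proof.
move=> msel mg mgi fE _ B mB; rewrite setTI.
have -> : f @^-1` B = ([set x | sel x = None] `&` (g @^-1` B)) `|`
    \bigcup_(i in [set: I]) ([set x | sel x = Some i] `&` (gi i @^-1` B)).
  apply/seteqP; split => x /=.
    by rewrite fE; case E: (sel x) => [i|] Bx; [right; exists i | left].
  by move=> [[E Bx]|[i _ [E Bx]]]; rewrite fE E.
apply: measurableU.
  by apply: measurableI => //; rewrite -[X in measurable X]setTI; exact: mg.
apply: fin_bigcup_measurable; first exact: finite_finset.
move=> i _; apply: measurableI => //.
by rewrite -[X in measurable X]setTI; exact: mgi.
Qed.

Lemma measurable_bigmaxe (I : eqType) (r : seq I) (p : pred I)
    (F : I -> T -> \bar R) :
  (forall i, measurable_fun setT (F i)) ->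
  measurable_fun setT (fun x => \big[maxe/-oo]_(i <- r | p i) F i x).
Proof.
move=> mF; elim: r => [|j r IH].
  by under eq_fun do rewrite big_nil; exact: measurable_cst.
under eq_fun do rewrite big_cons; case: (p j) => //.
exact: measurable_maxe.
Qed.

End measurability.

Section integrals_on_nonnegatives.
Variables (R : realType) (P : probability R R).
Hypothesis P_nonneg : P [set y | y < 0] = 0%E.
Local Open Scope ereal_scope.

Lemma measurable_fun_integral_max (f : R -> \bar R) :
  measurable_fun setT f ->
  measurable_fun setT (fun X : R => \int[P]_z f (Num.max X z)).
Proof.
move=> mf; pose F (p : R * R) := f (Num.max p.1 p.2).
have mF : measurable_fun setT F.
  apply: measurableT_comp => //.
  by apply: measurable_maxr; [exact: measurable_fst | exact: measurable_snd].
rewrite [X in measurable_fun _ X](_ : _ =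
    (fun X => \int[P]_z F^\+ (X, z)) \- (fun X => \int[P]_z F^\- (X, z))).
  apply: emeasurable_funB.
  - apply: (measurable_fun_fubini_tonelli_F (m2 := P)) => //.
    exact: measurable_funepos.
  - apply: (measurable_fun_fubini_tonelli_F (m2 := P)) => //.
    exact: measurable_funeneg.
apply/funext => X; rewrite [LHS]integralE.
by congr (_ - _); apply: eq_integral => z _; rewrite !(funeposE, funenegE).
Qed.

Lemma probability_integral_cst (m : \bar R) : \int[P]_z (cst m) z = m.
Proof. by rewrite integral_cst //= probability_setT mule1. Qed.

Let ae_nonneg (f g : R -> \bar R) : (forall z, (0 <= z)%R -> f z <= g z) ->
  {ae P, forall x, setT x -> f x <= g x}.
Proof.
move=> fg; exists [set y : R | (y < 0)%R]; split => //.
  rewrite [X in measurable X](_ : _ = `]-oo, 0%R[%classic); first exact: measurable_itv.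
  by apply/seteqP; split => y /=; rewrite in_itv.
by move=> y /=; apply: contra_notP => /negP; rewrite -leNgt => y0 _; exact: fg.
Qed.

Lemma le_integral_on_nonneg (f g : R -> \bar R) :
  measurable_fun setT f -> measurable_fun setT g ->
  (forall z, (0 <= z)%R -> f z <= g z) ->
  \int[P]_z f z <= \int[P]_z g z.
Proof.
move=> mf mg fg; rewrite (integralE _ _ f) (integralE _ _ g).
have fg_in : {in [set z : R | (0 <= z)%R], forall z, f z <= g z}.
  by move=> z; rewrite inE; exact: fg.
apply: leeB.
- apply: ae_ge0_le_integral => //; try by move=> x _; exact: funepos_ge0.
  + exact: measurable_funepos.
  + exact: measurable_funepos.
  + by apply: ae_nonneg => z z0; apply: funepos_le fg_in _ _; rewrite inE.
- apply: ae_ge0_le_integral => //; try by move=> x _; exact: funeneg_ge0.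
  + exact: measurable_funeneg.
  + exact: measurable_funeneg.
  + by apply: ae_nonneg => z z0; apply: funeneg_le fg_in _ _; rewrite inE.
Qed.

Lemma cst_le_integral_on_nonneg (m : \bar R) (g : R -> \bar R) :
  measurable_fun setT g -> (forall z, (0 <= z)%R -> m <= g z) ->
  m <= \int[P]_z g z.
Proof.
move=> mg mg_ge; rewrite -[X in X <= _]probability_integral_cst.
by apply: le_integral_on_nonneg => //; exact: measurable_cst.
Qed.

End integrals_on_nonnegatives.

Lemma exists_min_sublevel (R : realType) (f : R -> R) (c b x : R) :
  (forall r r', r <= r' -> f r <= f r' + (r' - r)) ->
  f x <= c -> (forall r, f r <= c -> b <= r) ->
  exists r0, f r0 = c /\ forall r, f r <= c -> r0 <= r.
Proof.
move=> f_lip fx lbE; pose E := [set r | f r <= c].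
have hinf : has_inf E by split; [exists x | exists b => r; exact: lbE].
pose r0 := inf E.
have r0_le r : f r <= c -> r0 <= r by move=> Er; apply: ge_inf => //; case: hinf.
exists r0; split => //; apply/le_anti/andP; split.
  apply/ler_addgt0Pr => e e0.
  have [r Er rlt] := inf_adherent e0 hinf.
  have := f_lip _ _ (r0_le _ Er); move: Er; rewrite /E /= -/r0; lra.
rewrite leNgt; apply/negP => fr0.
have : f (r0 - (c - f r0)) <= c.
  have := f_lip (r0 - (c - f r0)) r0; rewrite lerBlDr lerDl subr_ge0; lra.
by move=> /r0_le; lra.
Qed.

Section expected_excess.
Variables (R : realType) (a0 : project R) (w : R -> R).
Hypothesis a0_nonneg : pdist a0 [set y | y < 0] = 0%E.
Hypothesis mw : measurable_fun setT w.
Hypothesis w_ge0 : forall y, 0 <= y -> 0 <= w y.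
Hypothesis w_mono : forall y y', 0 <= y -> y <= y' -> w y <= w y'.
Local Open Scope ereal_scope.

Definition retained (y : R) := (y - w y)%R.

Definition expected_excess (r : R) : \bar R :=
  \int[pdist a0]_y (Num.max (w y - r) 0)%:E.

Definition deterring (x : R) : Prop :=
  (0 <= x)%R /\ expected_excess (w x) < (pcost a0)%:E.

Let measurable_excess r : measurable_fun setT (fun y => (Num.max (w y - r) 0)%:E).
Proof.
apply/measurable_EFinP; apply: measurable_maxr => //.
by apply: measurable_funB => //; exact: measurable_cst.
Qed.

Let excess_ge0 r y : 0 <= (Num.max (w y - r) 0)%:E.
Proof. by rewrite lee_fin le_max lexx orbT. Qed.

Lemma integral_w_max X : (0 <= X)%R ->
  \int[pdist a0]_y (w (Num.max X y))%:E = (w X)%:E + expected_excess (w X).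
Proof.
move=> X0.
have mwX : measurable_fun setT (fun y => (w (Num.max X y))%:E).
  by apply/measurable_EFinP; apply: measurableT_comp => //; exact: measurable_maxr.
have split_wX y : (0 <= y)%R ->
    (w (Num.max X y))%:E = cst (w X)%:E y + (Num.max (w y - w X) 0)%:E.
  move=> y0 /=; rewrite -EFinD; congr (_%:E); case: (leP X y) => Xy.
    have wXy : (0 <= w y - w X)%R by rewrite subr_ge0 w_mono.
    by rewrite (max_idPl wXy) addrC subrK.
  have wyX : (w y - w X <= 0)%R by rewrite subr_le0 w_mono // ltW.
  by rewrite (max_idPr wyX) addr0.
have msum : measurable_fun setT
    (fun y => cst (w X)%:E y + (Num.max (w y - w X) 0)%:E).
  by apply: emeasurable_funD => //; exact: measurable_cst.
rewrite (_ : \int[_]_y _ = \int[pdist a0]_y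
    (cst (w X)%:E y + (Num.max (w y - w X) 0)%:E)).
  rewrite ge0_integralD //; first by rewrite probability_integral_cst.
  by move=> y _; rewrite lee_fin w_ge0.
by apply/le_anti/andP; split; apply: le_integral_on_nonneg => // z z0;
  rewrite split_wX.
Qed.

Lemma expected_excess_ge0 r : 0 <= expected_excess r.
Proof. exact: integral_ge0. Qed.

Lemma expected_excess_antimono r r' : (r <= r')%R ->
  expected_excess r' <= expected_excess r.
Proof.
move=> rr; apply: ge0_le_integral => // y _.
by rewrite lee_fin; apply: le_max2 => //; apply: lerB.
Qed.

Lemma expected_excess_lipschitz r r' : (r <= r')%R ->
  expected_excess r <= expected_excess r' + (r' - r)%:E.
Proof.
move=> rr; apply: (@le_trans _ _ (\int[pdist a0]_y
    ((Num.max (w y - r') 0)%:E + cst (r' - r)%:E y))).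
  apply: ge0_le_integral => //.
  - by apply: emeasurable_funD => //; exact: measurable_cst.
  - move=> y _ /=; rewrite -EFinD lee_fin ge_max; apply/andP; split.
      have : (w y - r' <= Num.max (w y - r') 0)%R by rewrite le_max lexx.
      lra.
    by have := excess_ge0 r' y; rewrite lee_fin; lra.
rewrite ge0_integralD //; first by rewrite probability_integral_cst.
by move=> y _; rewrite lee_fin subr_ge0.
Qed.

Lemma expected_excess_ge_opp r : (r <= 0)%R -> (- r)%:E <= expected_excess r.
Proof.
move=> r0; apply: cst_le_integral_on_nonneg => // z z0.
have := w_ge0 z0; rewrite lee_fin le_max => wz; apply/orP; left; lra.
Qed.

Lemma deterring_index_lt x : (0 <= pcost a0)%R -> deterring x ->
  exists r, is_index w a0 r /\ (r < w x)%R.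
Proof.
move=> c0 [x0 hx].
have hx_fin : expected_excess (w x) < +oo by apply: lt_trans hx _; exact: ltey.
have excess_fin r : expected_excess r \is a fin_num.
  rewrite ge0_fin_numE ?expected_excess_ge0 //; case: (leP r (w x)) => rx.
    apply: le_lt_trans (expected_excess_lipschitz rx) _.
    by apply: lte_add_pinfty => //; exact: ltey.
  exact: le_lt_trans (expected_excess_antimono (ltW rx)) hx_fin.
pose f r := fine (expected_excess r).
have fE r : (f r)%:E = expected_excess r by rewrite fineK.
have fx : (f (w x) < pcost a0)%R by rewrite -lte_fin fE.
have [r0 [fr0 r0_min]] : exists r0, f r0 = pcost a0 /\
    forall r, (f r <= pcost a0)%R -> (r0 <= r)%R.
  apply: (@exists_min_sublevel _ f _ (- pcost a0) (w x)); last 2 first.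
  - exact: ltW.
  - move=> r fr; rewrite leNgt; apply/negP => rlt.
    have r0 : (r <= 0)%R by apply/ltW/(lt_le_trans rlt); rewrite oppr_le0.
    by have := expected_excess_ge_opp r0; rewrite -fE lee_fin; lra.
  by move=> r r' rr; rewrite -lee_fin EFinD !fE expected_excess_lipschitz.
exists r0; split.
  split; first by rewrite -fr0 fE.
  by move=> r' hr'; apply: r0_min; rewrite -lee_fin fE /expected_excess -hr'.
by rewrite lt_neqAle r0_min ?ltW // andbT; apply: contraTneq fx => <-; rewrite fr0 ltxx.
Qed.

Definition retained_after (X : R) := \int[pdist a0]_y (retained (Num.max X y))%:E.
Definition deterring_inf := ereal_inf [set (retained x)%:E | x in deterring].

Hypothesis retained_mono :
  forall y y', (0 <= y)%R -> (y <= y')%R -> (retained y <= retained y')%R.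

Lemma measurable_retained : measurable_fun setT retained.
Proof. by apply: measurable_funB => //; exact: measurable_id. Qed.

Lemma retained_after_mono X X' : (0 <= X)%R -> (X <= X')%R ->
  retained_after X <= retained_after X'.
Proof.
have mret (Z : R) : measurable_fun setT (fun y => (retained (Num.max Z y))%:E).
  apply/measurable_EFinP; apply: measurableT_comp; first exact: measurable_retained.
  exact: measurable_maxr.
move=> X0 XX; apply: le_integral_on_nonneg => // y y0.
by rewrite lee_fin; apply: retained_mono; [rewrite le_max X0 | exact: le_max2].
Qed.

Lemma retained0_le_deterring_inf : (retained 0)%:E <= deterring_inf.
Proof.
by apply: le_ereal_inf_tmp => _ [x [x0 _] <-]; rewrite lee_fin retained_mono.
Qed.

End expected_excess.

Section agent_search.
Variables (R : realType) (w : R -> R) (N : nat) (A : 'I_N -> project R).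
Hypothesis mw : measurable_fun setT w.
Hypothesis A_nonneg : forall i, pdist (A i) [set y | y < 0] = 0%E.
Local Notation P i := (pdist (A i)).
Local Notation c i := (pcost (A i)).
Local Open Scope ereal_scope.

Definition opened (h : seq ('I_N * R)) : {set 'I_N} := [set i | i \in map fst h].
Definition held_prize (h : seq ('I_N * R)) : R :=
  foldl (fun a p => Num.max a p.2) 0%R h.

Fixpoint value k (S : {set 'I_N}) (X : R) : \bar R :=
  match k with
  | 0 => (w (Num.max X 0))%:E
  | k.+1 => maxe (w (Num.max X 0))%:E (\big[maxe/-oo]_(i | i \notin S)
      (\int[P i]_z value k (i |: S) (Num.max X z) - (c i)%:E))
  end.

Definition gain k (S : {set 'I_N}) (X : R) (i : 'I_N) :=
  \int[P i]_z value k (i |: S) (Num.max X z) - (c i)%:E.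
Definition best_gain k (S : {set 'I_N}) (X : R) :=
  \big[maxe/-oo]_(i | i \notin S) gain k S X i.
Definition remaining (S : {set 'I_N}) := (N - #|S|)%N.

(* Only [remaining S] projects are unopened, so after one more opening the
   recursion of [value] needs depth [(remaining S).-1]. *)
Definition stops (S : {set 'I_N}) (X : R) : bool :=
  (remaining S == 0)%N || (best_gain (remaining S).-1 S X < (w (Num.max X 0))%:E).
Definition is_best (S : {set 'I_N}) (X : R) (i : 'I_N) : bool :=
  (i \notin S) && (gain (remaining S).-1 S X i == best_gain (remaining S).-1 S X).

(* The first maximiser along l: unlike an arg max, its level sets are
   measurable in X. *)
Definition first_best (S : {set 'I_N}) (l : seq 'I_N) (X : R) : option 'I_N :=
  foldr (fun i acc => if is_best S X i then Some i else acc) None l.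

Definition next_project (S : {set 'I_N}) (X : R) : option 'I_N :=
  if stops S X then None else first_best S (enum 'I_N) X.

Definition dp_strategy : strategy R N := fun h =>
  if next_project (opened h) (held_prize h) is Some i then Open R i
  else Stop N (held_prize h).

Fixpoint dp_payoff (g : R -> R) (cc : 'I_N -> R) k (S : {set 'I_N}) (X : R) : \bar R :=
  match next_project S X with
  | None => (g (Num.max X 0))%:E
  | Some i => match k with
     | 0 => (g 0%R)%:E
     | k.+1 => \int[P i]_z dp_payoff g cc k (i |: S) (Num.max X z) - (cc i)%:E
     end
  end.

Lemma held_prize_rcons h i z : held_prize (rcons h (i, z)) = Num.max (held_prize h) z.
Proof. by rewrite /held_prize foldl_rcons. Qed.

Lemma opened_rcons h i z : opened (rcons h (i, z)) = i |: opened h.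
Proof. by apply/setP => j; rewrite !inE map_rcons mem_rcons in_cons. Qed.

Lemma opened_nil : opened [::] = finset.set0.
Proof. by apply/setP => i; rewrite !inE. Qed.

Lemma held_prize_ge0 h : (0 <= held_prize h)%R.
Proof.
elim/last_ind: h => [|h [i z] IH]; first by rewrite /held_prize.
by rewrite held_prize_rcons le_max IH.
Qed.

Lemma held_prize_observed h : (held_prize h == 0%R) || (held_prize h \in map snd h).
Proof.
elim/last_ind: h => [|h [i z] IH]; first by rewrite /held_prize eqxx.
rewrite held_prize_rcons map_rcons mem_rcons in_cons /=.
case: (leP (held_prize h) z) => _; first by rewrite eqxx !orbT.
by case/orP: IH => [->//|->]; rewrite !orbT.
Qed.

Lemma le_held_prize h x : x \in map snd h -> (x <= held_prize h)%R.
Proof.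
elim/last_ind: h => [//|h [i z] IH].
rewrite held_prize_rcons map_rcons mem_rcons in_cons le_max.
by case/orP => [/eqP->|/IH->]; rewrite ?lexx ?orbT.
Qed.

Lemma held_prize_le h b : (0 <= b)%R -> all (fun p => p.2 <= b)%R h ->
  (held_prize h <= b)%R.
Proof.
move=> b0; elim/last_ind: h => [_|h [i z] IH]; first by rewrite /held_prize.
by rewrite all_rcons held_prize_rcons ge_max => /andP[/= -> /IH ->].
Qed.

Lemma first_best_is_best S l X i : first_best S l X = Some i -> is_best S X i.
Proof.
elim: l => [//|j l IH] /=; case E: (is_best S X j); last exact: IH.
by case=> <-.
Qed.

Lemma first_best_None S l X :
  first_best S l X = None -> forall j, j \in l -> ~~ is_best S X j.
Proof.
elim: l => [//|j l IH] /=; case E: (is_best S X j) => // /IH H k.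
by rewrite in_cons => /orP[/eqP->|/H]; rewrite ?E.
Qed.

Lemma next_project_is_best S X i : next_project S X = Some i -> is_best S X i.
Proof. by rewrite /next_project; case: (stops S X) => // /first_best_is_best. Qed.

Lemma next_project_notin S X i : next_project S X = Some i -> i \notin S.
Proof. by move/next_project_is_best/andP => []. Qed.

Lemma next_project_continues S X i : next_project S X = Some i -> ~~ stops S X.
Proof. by rewrite /next_project; case: (stops S X). Qed.

Lemma first_best_exists S X : ~~ stops S X ->
  exists i, first_best S (enum 'I_N) X = Some i.
Proof.
rewrite /stops negb_or => /andP[nz _].
have : (0 < #|~: S|)%N.
  move: nz; rewrite /remaining; have := cardsC S; rewrite card_ord.
  by move: #|~: S| #|S| => m s <-; rewrite addKn lt0n.
case/card_gt0P => i0; rewrite inE => i0S.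
case E: (first_best _ _ _) => [i|]; first by exists i.
have [j jS Gj] := @eq_bigmax _ _ _ -oo i0 (fun i => i \notin S)
   (fun i => gain (remaining S).-1 S X i) i0S (fun _ _ => leNye _).
have := first_best_None E (mem_enum _ j).
by rewrite /is_best /best_gain Gj eqxx andbT; move: jS; rewrite unfold_in => ->.
Qed.

Lemma next_project_None S X : next_project S X = None -> stops S X.
Proof.
rewrite /next_project; case St: (stops S X) => //.
by case: (first_best_exists (negbT St)) => j ->.
Qed.

Lemma payoff_dp_strategy g cc k h :
  payoff A g cc dp_strategy k h = dp_payoff g cc k (opened h) (held_prize h).
Proof.
elim: k h => [|k IH] h /=; rewrite /dp_strategy;
  case E: (next_project _ _) => [i|].
- by move: E => /next_project_notin; rewrite inE => /negbTE ->.
- by rewrite held_prize_observed (max_idPl (held_prize_ge0 h)).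
- move: (E) => /next_project_notin; rewrite inE => /negbTE ->.
  congr (_ + _); apply: eq_integral => z _.
  by rewrite IH held_prize_rcons opened_rcons.
- by rewrite held_prize_observed (max_idPl (held_prize_ge0 h)).
Qed.

Let measurable_w_max : measurable_fun setT (fun X : R => (w (Num.max X 0%R))%:E).
Proof.
apply/measurable_EFinP; apply: measurableT_comp => //.
by apply: measurable_maxr => //; exact: measurable_cst.
Qed.

Lemma measurable_value k S : measurable_fun setT (value k S).
Proof.
elim: k S => [|k IH] S //=; apply: measurable_maxe => //.
apply: measurable_bigmaxe => i; apply: emeasurable_funD => //.
exact: measurable_fun_integral_max.
Qed.

Lemma measurable_gain k S i : measurable_fun setT (fun X => gain k S X i).
Proof.
apply: emeasurable_funD => //.
by apply: measurable_fun_integral_max; exact: measurable_value.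
Qed.

Lemma measurable_best_gain k S : measurable_fun setT (best_gain k S).
Proof. by apply: measurable_bigmaxe => i; exact: measurable_gain. Qed.

Lemma measurable_stops S : measurable [set X | stops S X].
Proof.
rewrite /stops; case: (remaining S == 0)%N => /=; first exact: measurable_cst_set.
rewrite -[X in measurable X]setTI; apply: measurable_lte => //.
exact: measurable_best_gain.
Qed.

Lemma measurable_is_best S i : measurable [set X | is_best S X i].
Proof.
rewrite /is_best; case: (i \notin S) => /=; last exact: measurable_cst_set.
rewrite [X in measurable X](_ : _ = setT `&`
    [set X | gain (remaining S).-1 S X i = best_gain (remaining S).-1 S X]).
  by apply: measurable_eqe => //; [exact: measurable_gain | exact: measurable_best_gain].
by apply/seteqP; split => X /=; [move/eqP|move=> [_ /eqP]].
Qed.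

Lemma measurable_first_best S l o : measurable [set X | first_best S l X = o].
Proof.
elim: l o => [|j l IH] o /=; first exact: measurable_cst_set.
rewrite [X in measurable X](_ : _ = ([set X | is_best S X j] `&` [set _ | Some j = o])
   `|` (~` [set X | is_best S X j] `&` [set X | first_best S l X = o])).
  apply: measurableU; apply: measurableI => //.
  - exact: measurable_is_best.
  - exact: measurable_cst_set.
  - by apply: measurableC; exact: measurable_is_best.
by apply/seteqP; split => X /=; case: (is_best S X j) => //=;
  by [left | right | case=> [[]|[]] | case=> [[]|[_]]].
Qed.

Lemma measurable_next_project S o : measurable [set X | next_project S X = o].
Proof.
rewrite /next_project [X in measurable X](_ : _ =
    ([set X | stops S X] `&` [set _ | None = o]) `|`
    (~` [set X | stops S X] `&` [set X | first_best S (enum 'I_N) X = o])).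
  apply: measurableU; apply: measurableI => //.
  - exact: measurable_stops.
  - exact: measurable_cst_set.
  - by apply: measurableC; exact: measurable_stops.
  - exact: measurable_first_best.
by apply/seteqP; split => X /=; case: (stops S X) => //=;
  by [left | right | case=> [[]|[]] | case=> [[]|[_]]].
Qed.

Lemma measurable_dp_payoff g cc k S : measurable_fun setT g ->
  measurable_fun setT (dp_payoff g cc k S).
Proof.
move=> mg; have mgX : measurable_fun setT (fun X : R => (g (Num.max X 0%R))%:E).
  apply/measurable_EFinP; apply: measurableT_comp => //.
  by apply: measurable_maxr => //; exact: measurable_cst.
elim: k S => [|k IH] S.
  apply: (@measurable_fun_option_cases _ _ _ _ (next_project S) _ _ (fun i _ => (g 0%R)%:E)).
  - exact: measurable_next_project.
  - exact: mgX.
  - by move=> i; exact: measurable_cst.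
  - by move=> X /=; case: (next_project S X).
apply: (@measurable_fun_option_cases _ _ _ _ (next_project S) _ _
   (fun i X => \int[P i]_z dp_payoff g cc k (i |: S) (Num.max X z) - (cc i)%:E)).
- exact: measurable_next_project.
- exact: mgX.
- move=> i; apply: emeasurable_funD => //.
  exact: measurable_fun_integral_max.
- by move=> X /=; case: (next_project S X).
Qed.

Lemma dp_strategy_admissible : admissible w A dp_strategy.
Proof.
have mpsi : measurable_fun setT (fun y : R => y - w y)%R.
  by apply: measurable_funB => //; exact: measurable_id.
move=> k h i; split; under eq_fun do rewrite payoff_dp_strategy opened_rcons held_prize_rcons;
  by apply: measurableT_comp; [exact: measurable_dp_payoff | exact: measurable_maxr].
Qed.

Hypothesis w_mono : forall y y', (0 <= y)%R -> (y <= y')%R -> (w y <= w y')%R.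

Lemma stop_le_value k S X : (w (Num.max X 0))%:E <= value k S X.
Proof. by case: k => [|k] /=; rewrite ?lexx // le_max lexx. Qed.

Lemma remaining_setU1 (S : {set 'I_N}) i :
  i \notin S -> remaining (i |: S) = (remaining S).-1.
Proof. by move=> iS; rewrite /remaining cardsU1 iS add1n subnS. Qed.

Lemma dp_payoff_agent k S X : k = remaining S -> (0 <= X)%R ->
  dp_payoff w (fun i => c i) k S X = value k S X.
Proof.
elim: k S X => [|k IH] S X hk X0 /=; case E: (next_project S X) => [i|] //.
- by move: (next_project_continues E); rewrite /stops -hk.
- have /andP[iS /eqP Gi] := next_project_is_best E.
  have kk : (remaining S).-1 = k by rewrite -hk.
  rewrite -/(best_gain k S X) -kk -Gi kk /gain.
  rewrite (eq_integral (fun z => value k (i |: S) (Num.max X z))); last first.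
    move=> z _; apply: IH; first by rewrite remaining_setU1 // -hk.
    by rewrite le_max X0.
  apply/esym/max_idPr; move: (next_project_continues E).
  by rewrite /stops -hk /= -leNgt -/(best_gain _ S X) -kk -Gi kk.
- rewrite -/(best_gain k S X); have := next_project_None E.
  by rewrite /stops -hk /= => /ltW/max_idPl.
Qed.

Lemma payoff_le_value t : admissible w A t -> forall k h, all (fun p => 0 <= p.2)%R h ->
  payoff A w (fun i => c i) t k h <= value k (opened h) (held_prize h).
Proof.
move=> adm; have w0_le h : (w 0 <= w (Num.max (held_prize h) 0))%R.
  by apply: w_mono => //; rewrite le_max lexx orbT.
have wx_le h x : all (fun p => 0 <= p.2)%R h -> (x == 0%R) || (x \in map snd h) ->
    (w x <= w (Num.max (held_prize h) 0))%R.
  move=> hn /orP[/eqP->//|xh]; apply: w_mono; last by rewrite le_max le_held_prize.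
  by move: hn => /allP; move: xh => /mapP[[j z] jz ->] /(_ _ jz).
elim=> [|k IH] h hn /=; case: (t h) => [i|x].
- by case: ifP => _; rewrite lee_fin.
- by case: ifP => xh; rewrite lee_fin //; exact: wx_le.
- case: ifP => ih; first by rewrite le_max lee_fin w0_le.
  rewrite le_max; apply/orP; right.
  apply: (@le_trans _ _ (gain k (opened h) (held_prize h) i)); last first.
    by apply: le_bigmax_cond; rewrite inE ih.
  apply: leeD => //; apply: le_integral_on_nonneg => //.
  + by case: (adm k h i).
  + by apply: measurableT_comp; [exact: measurable_value | exact: measurable_maxr].
  + move=> z z0; rewrite -(held_prize_rcons h i) -(opened_rcons h i z).
    by apply: IH; rewrite all_rcons /= z0.
- by case: ifP => xh; rewrite le_max lee_fin ?w0_le ?wx_le ?orbT.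
Qed.

Lemma dp_strategy_optimal : agent_optimal w A dp_strategy.
Proof.
split=> [|t adm]; first exact: dp_strategy_admissible.
rewrite /agent_payoff payoff_dp_strategy dp_payoff_agent; last 2 first.
- by rewrite /remaining opened_nil cards0 subn0.
- exact: held_prize_ge0.
exact: payoff_le_value.
Qed.

Section principal_guarantee.
Variables (a0 : project R) (i0 : 'I_N).
Hypothesis A_i0 : A i0 = a0.
Hypothesis w_ge0 : forall y, (0 <= y)%R -> (0 <= w y)%R.
Hypothesis retained_mono :
  forall y y', (0 <= y)%R -> (y <= y')%R -> (retained w y <= retained w y')%R.

Let a0_nonneg : pdist a0 [set y | (y < 0)%R] = 0.
Proof. by rewrite -A_i0. Qed.

Lemma remaining0_mem (S : {set 'I_N}) : remaining S = 0%N -> i0 \in S.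
Proof.
rewrite /remaining => /eqP; rewrite subn_eq0 => NS; apply/negPn/negP => iS.
by have := max_card (mem (i0 |: S)); rewrite cardsU1 iS card_ord add1n ltnNge NS.
Qed.

Lemma stops_deterring (S : {set 'I_N}) X : (0 <= X)%R -> i0 \notin S ->
  stops S X -> deterring a0 w X.
Proof.
move=> X0 iS; rewrite /stops; case: eqP => [/remaining0_mem|_] /=.
  by rewrite (negbTE iS).
rewrite (max_idPl X0) => stop; split => //.
have : gain (remaining S).-1 S X i0 < (w X)%:E.
  by apply: le_lt_trans stop; apply: le_bigmax_cond.
rewrite /gain A_i0 => gain_lt.
suff : (w X)%:E + expected_excess a0 w (w X) - (pcost a0)%:E < (w X)%:E.
  by rewrite lteBlDr // lteD2lE.
apply: le_lt_trans gain_lt; apply: leeD => //.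
rewrite -(integral_w_max a0_nonneg mw w_ge0 w_mono X0).
apply: le_integral_on_nonneg => //.
- by apply/measurable_EFinP; apply: measurableT_comp => //; exact: measurable_maxr.
- by apply: measurableT_comp; [exact: measurable_value | exact: measurable_maxr].
- move=> z z0; apply: le_trans (stop_le_value _ _ _).
  by rewrite (max_idPl (_ : 0 <= Num.max X z)%R) // le_max X0.
Qed.

Local Notation principal_dp := (dp_payoff (retained w) (fun=> 0%R)).

Let measurable_principal_dp_max k (S : {set 'I_N}) (X : R) :
  measurable_fun setT (fun z => principal_dp k S (Num.max X z)).
Proof.
apply: measurableT_comp; last exact: measurable_maxr.
by apply: measurable_dp_payoff; exact: measurable_retained mw.
Qed.

Lemma retained_le_dp_payoff k S X : k = remaining S -> (0 <= X)%R ->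
  (retained w X)%:E <= principal_dp k S X.
Proof.
elim: k S X => [|k IH] S X hk X0; rewrite /=;
  case E: (next_project S X) => [i|]; rewrite ?(max_idPl X0) //.
- by move: (next_project_continues E); rewrite /stops -hk.
- have iS := next_project_notin E.
  rewrite oppr0 adde0; apply: cst_le_integral_on_nonneg => // z z0.
  apply: le_trans (IH _ _ _ _); first by rewrite lee_fin retained_mono ?le_max ?lexx.
  + by rewrite remaining_setU1 // -hk.
  + by rewrite le_max X0.
Qed.

Lemma dp_payoff_principal_ge k S X m : k = remaining S -> (0 <= X)%R ->
  i0 \notin S -> m <= retained_after a0 w X -> m <= deterring_inf a0 w ->
  m <= principal_dp k S X.
Proof.
elim: k S X => [|k IH] S X hk X0 iS hJ hI; rewrite /=;
  case E: (next_project S X) => [i|].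
- by move: (next_project_continues E); rewrite /stops -hk.
- rewrite (max_idPl X0); apply: le_trans hI _; apply: ereal_inf_lbound.
  by exists X => //; exact: stops_deterring iS (next_project_None E).
- have iSi := next_project_notin E; have hk' : k = remaining (i |: S).
    by rewrite remaining_setU1 // -hk.
  have Xz z : (0 <= Num.max X z)%R by rewrite le_max X0.
  rewrite oppr0 adde0; case: (i =P i0) => [ii0|ne].
    apply: le_trans hJ _; rewrite /retained_after -A_i0 -ii0.
    apply: (le_integral_on_nonneg (A_nonneg i)); last first.
    + by move=> z _; exact: retained_le_dp_payoff.
    + exact: measurable_principal_dp_max.
    + apply/measurable_EFinP; apply: measurableT_comp; last exact: measurable_maxr.
      exact: measurable_retained mw.
  apply: cst_le_integral_on_nonneg => // z z0; apply: IH => //.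
    by rewrite in_setU1 negb_or iS andbT; apply/eqP => /esym.
  apply: le_trans hJ (retained_after_mono a0_nonneg mw retained_mono _ _) => //.
  by rewrite le_max lexx.
- rewrite (max_idPl X0); apply: le_trans hI _; apply: ereal_inf_lbound.
  by exists X => //; exact: stops_deterring iS (next_project_None E).
Qed.

Lemma VP_given_ge_min : mine (retained_after a0 w 0) (deterring_inf a0 w) <= VP_given w A.
Proof.
apply: (@le_trans _ _ (principal_payoff w A dp_strategy)); last first.
  by apply: ereal_sup_ubound; exists dp_strategy => //; exact: dp_strategy_optimal.
rewrite /principal_payoff payoff_dp_strategy opened_nil.
apply: dp_payoff_principal_ge; rewrite ?inE ?ge_min ?lexx ?orbT //.
by rewrite /remaining cards0 subn0.
Qed.

End principal_guarantee.

End agent_search.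

Section doubly_monotone_contract.
Variables (R : realType) (a0 : project R) (w : R -> R).
Hypothesis va0 : valid_project a0.
Hypothesis mw : measurable_fun setT w.
Hypothesis w_ge0 : forall y, 0 <= y -> 0 <= w y.
Hypothesis dm : doubly_monotone w.
Local Open Scope ereal_scope.

Let w_mono y y' : (0 <= y)%R -> (y <= y')%R -> (w y <= w y')%R.
Proof. by move=> y0 yy; case: (dm y0 yy). Qed.

Let retained_mono y y' : (0 <= y)%R -> (y <= y')%R ->
  (retained w y <= retained w y')%R.
Proof. by move=> y0 yy; case: (dm y0 yy). Qed.

Let a0_nonneg : pdist a0 [set y | (y < 0)%R] = 0.
Proof. by case: va0. Qed.

Let measurable_w_max (x : R) : measurable_fun setT (fun z => (w (Num.max x z))%:E).
Proof.
by apply/measurable_EFinP; apply: measurableT_comp => //; exact: measurable_maxr.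
Qed.

Lemma VP_le_VP_given_single : VP w a0 <= VP_given w (single a0).
Proof. by apply: ereal_inf_lbound; exists 0%N, (single a0). Qed.

Lemma VP_given_single_le : VP_given w (single a0) <= retained_after a0 w 0.
Proof.
have mret : measurable_fun setT (fun z : R => (retained w (Num.max 0 z))%:E).
  apply/measurable_EFinP; apply: measurableT_comp; last exact: measurable_maxr.
  exact: measurable_retained.
have ret0_le : (retained w 0)%:E <= retained_after a0 w 0.
  apply: cst_le_integral_on_nonneg => // z z0.
  by rewrite lee_fin retained_mono // le_max lexx.
apply: ge_ereal_sup => _ [s [adm _] <-].
rewrite /principal_payoff /=; case: (s [::]) => [i|x] /=; last first.
  by case: ifP => [/orP[/eqP->//|//]|_].
rewrite oppr0 adde0; apply: le_integral_on_nonneg => //; first by case: (adm 0%N [::] i).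
move=> z z0; rewrite (max_idPr z0).
case: (s [:: (i, z)]) => [j|y] /=; first by case: ifP; rewrite lee_fin retained_mono.
case: ifP => [/orP[/eqP->|]|_]; rewrite lee_fin.
- exact: retained_mono.
- by rewrite inE => /eqP->.
- exact: retained_mono.
Qed.

Lemma min_le_VP : mine (retained_after a0 w 0) (deterring_inf a0 w) <= VP w a0.
Proof.
apply: le_ereal_inf_tmp => _ [n [A [vA A0 ->]]].
apply: (VP_given_ge_min mw _ w_mono A0 w_ge0 retained_mono).
by move=> i; case: (vA i).
Qed.

Lemma deterring_inf_le_VP : VP w a0 < VP_given w (single a0) ->
  deterring_inf a0 w <= VP w a0.
Proof.
move=> VP_lt; have := min_le_VP; rewrite ge_min => /orP[J_le|//].
have := le_lt_trans J_le (lt_le_trans VP_lt VP_given_single_le).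
by rewrite ltxx.
Qed.

Lemma deterring_inf_fin_num : VP w a0 < VP_given w (single a0) ->
  deterring_inf a0 w \is a fin_num.
Proof.
move=> VP_lt; rewrite fin_numE -ltNye -ltey; apply/andP; split.
  exact: lt_le_trans (ltNyr _) (retained0_le_deterring_inf a0 retained_mono).
exact: le_lt_trans (deterring_inf_le_VP VP_lt) (lt_le_trans VP_lt (leey _)).
Qed.

Section sure_prize.
Variable x : R.
Hypothesis x_det : deterring a0 w x.
Let A2 := pair a0 (dirac_project x).
Let j0 : 'I_2 := ord0.
Let j1 : 'I_2 := ord_max.

Let ord2P (i : 'I_2) : i = j0 \/ i = j1.
Proof. by case: i => [[|[|//]]] hi; [left | right]; apply/val_inj. Qed.

Let A2_nonneg i : pdist (A2 i) [set y | (y < 0)%R] = 0.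
Proof.
rewrite /A2 /pair; case: ifP => _ //=.
rewrite diracE memNset //=; apply/negP; rewrite -leNgt; by case: x_det.
Qed.

Lemma integral_dirac_project (f : R -> \bar R) : measurable_fun setT f ->
  \int[pdist (dirac_project x)]_z f z = f x.
Proof. by move=> mf; rewrite /dirac_project /= integral_dirac // diracT mul1e. Qed.

Lemma value_pair_le k (S : {set 'I_2}) (X : R) : j0 \in S -> (0 <= X)%R ->
  value w A2 k S X <= (w (Num.max X x))%:E.
Proof.
have wX_le X' : (0 <= X')%R -> (w (Num.max X' 0))%:E <= (w (Num.max X' x))%:E.
  move=> X0; rewrite lee_fin; apply: w_mono; first by rewrite le_max X0.
  by apply: le_max2 => //; case: x_det.
elim: k S X => [|k IH] S X S0 X0 /=; first exact: wX_le.
rewrite ge_max wX_le //=; apply: bigmax_le => [|i iS]; first exact: leNye.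
have [ij0|->] := ord2P i; first by rewrite ij0 S0 in iS.
rewrite /A2 /pair /= integral_dirac_project; last first.
  apply: measurableT_comp; last exact: measurable_maxr.
  exact: measurable_value.
rewrite oppr0 adde0; apply: le_trans (IH _ _ _ _) _.
- by rewrite in_setU1 S0 orbT.
- by rewrite le_max X0.
- by rewrite -maxA maxxx.
Qed.

Lemma open_a0_lt t k h : admissible w A2 t -> t h = Open R j0 ->
  j0 \notin map fst h -> all (fun p => 0 <= p.2 <= x)%R h ->
  payoff A2 w (fun i => pcost (A2 i)) t k.+1 h < (w x)%:E.
Proof.
move=> adm th j0h hx /=; rewrite th (negbTE j0h) [A2 j0]/A2 /pair eqxx.
have [x0 x_lt] := x_det.
have M_le : (held_prize h <= x)%R.
  by apply: held_prize_le => //; apply/allP => p /(allP hx) /andP[].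
apply: (@le_lt_trans _ _ (\int[pdist a0]_z (w (Num.max x z))%:E - (pcost a0)%:E)).
  apply: leeD => //; apply: le_integral_on_nonneg => //; first by case: (adm k h j0).
  move=> z z0; apply: le_trans (payoff_le_value mw A2_nonneg w_mono adm k _) _.
    by rewrite all_rcons /= z0 (sub_all _ hx) // => p /andP[].
  rewrite held_prize_rcons opened_rcons.
  have Mz0 : (0 <= Num.max (held_prize h) z)%R by rewrite le_max z0 orbT.
  apply: le_trans (value_pair_le k (setU11 _ _) Mz0) _; rewrite lee_fin.
  apply: w_mono; first by rewrite le_max Mz0.
  by rewrite -maxA [Num.max z x]maxC maxA (max_idPr M_le).
rewrite (integral_w_max a0_nonneg mw w_ge0 w_mono x0).
by rewrite lteBlDr // lteD2lE.
Qed.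

Definition take_sure : strategy R 2 := fun h =>
  if h is [::] then Open R j1 else Stop 2 x.

Lemma take_sure_admissible : admissible w A2 take_sure.
Proof.
have pay g cc k h i z : payoff A2 g cc take_sure k (rcons h (i, z)) =
    if (x == 0%R) || (x \in map snd (rcons h (i, z))) then (g x)%:E else (g 0%R)%:E.
  by case: h => [|p h]; case: k.
move=> k h i; split; under eq_fun do rewrite pay map_rcons mem_rcons in_cons;
  apply: measurable_fun_ifT => //; do 2 apply: measurable_or => //;
  exact: (measurable_fun_eqr (f := cst x) (g := id)).
Qed.

Lemma payoff_open_sure g cc t k : cc j1 = 0%R -> t [::] = Open R j1 ->
  measurable_fun setT (fun z => payoff A2 g cc t k [:: (j1, z)]) ->
  payoff A2 g cc t k.+1 [::] = payoff A2 g cc t k [:: (j1, x)].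
Proof. by move=> c0 t1 mf; rewrite /= t1 /= integral_dirac_project // c0 sube0. Qed.

Lemma agent_payoff_take_sure : agent_payoff w A2 take_sure = (w x)%:E.
Proof.
rewrite /agent_payoff payoff_open_sure //; last by case: (take_sure_admissible 1%N [::] j1).
by rewrite /= in_cons eqxx orbT.
Qed.

Lemma optimal_principal_payoff_le t : agent_optimal w A2 t ->
  principal_payoff w A2 t <= (retained w x)%:E.
Proof.
move=> [adm opt]; have := opt _ take_sure_admissible.
rewrite agent_payoff_take_sure /agent_payoff => t_ge.
have [x0 _] := x_det; have ret0_le : (retained w 0 <= retained w x)%R by exact: retained_mono.
rewrite /principal_payoff; case E: (t [::]) => [i|y]; last first.
  by rewrite /= E /=; case: ifP => [/orP[/eqP->|//]|_]; rewrite lee_fin.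
have [ij0|ij1] := ord2P i.
  by move: t_ge; rewrite leNgt => /negP[]; apply: open_a0_lt; rewrite -?ij0.
rewrite ij1 in E; rewrite payoff_open_sure //; last by case: (adm 1%N [::] j1).
move: t_ge; rewrite payoff_open_sure //; last by case: (adm 1%N [::] j1).
case E2: (t [:: (j1, x)]) => [i'|v]; last first.
  rewrite /= E2 /= => _; case: ifP => [/orP[/eqP->|]|_]; rewrite lee_fin //.
  by rewrite inE => /eqP->.
have [i'j0|i'j1] := ord2P i'; rewrite ?i'j0 ?i'j1 in E2; last first.
  by rewrite /= E2 /= => _; rewrite lee_fin.
rewrite leNgt => /negP[].
by apply: (open_a0_lt 0%N adm E2) => //=; rewrite x0 lexx.
Qed.

Lemma VP_given_pair_le : VP_given w A2 <= (retained w x)%:E.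
Proof. by apply: ge_ereal_sup => _ [t topt <-]; exact: optimal_principal_payoff_le. Qed.

End sure_prize.

End doubly_monotone_contract.

Theorem mainTheorem1 (R : realType) (a0 : project R) (w : R -> R) :
  valid_project a0 ->
  measurable_fun setT w ->
  (forall y, 0 <= y -> 0 <= w y) ->
  doubly_monotone w ->
  VP_given w (single a0) = VP w a0 \/
  (forall eps : R, 0 < eps ->
     exists x : R, [/\ 0 <= x,
       (exists r, is_index w a0 r /\ r < w x)
     & (VP_given w (pair a0 (dirac_project x)) < VP w a0 + eps%:E)%E]).
Proof.
move=> va0 mw w_ge0 dm.
have [|VP_ne] := eqVneq (VP_given w (single a0)) (VP w a0); [by left | right].
have VP_lt : (VP w a0 < VP_given w (single a0))%E.
  by rewrite lt_neqAle eq_sym VP_ne VP_le_VP_given_single.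
have inf_le := deterring_inf_le_VP va0 mw w_ge0 dm VP_lt.
have inf_fin := deterring_inf_fin_num va0 mw w_ge0 dm VP_lt.
move=> eps eps0; have [_ [x x_det <-] x_lt] := lb_ereal_inf_adherent eps0 inf_fin.
exists x; split; first by case: x_det.
  by case: va0 => a0_nonneg _ c0; exact: deterring_index_lt.
apply: le_lt_trans (VP_given_pair_le va0 mw w_ge0 dm x_det) _.
by apply: lt_le_trans x_lt _; apply: leeD.
Qed.
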